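(* Let $G$ be a SIN topological group and $\xi=(E\xrightarrow{p}X)$ a numerable principal $G$-bundle with gauge group $\mathcal G$. Then $\mathcal G$, endowed with the uniform structure $\mathbf U_{\mathcal G}$, is a topological group. Moreover, $\mathcal G$ is then SIN.
   Context: A topological group is SIN if its identity element has a fundamental system of neighbourhoods invariant under conjugation. The gauge group $\mathcal G$ is the group of $G$-equivariant homeomorphisms $\chi:E\to E$ with $p\circ\chi=p$. Let $\gamma:E\times_XE\to G$ be defined by $y=z\cdot\gamma(y,z)$. Let $\mathcal V_G$ be the set of open sets $V\subset G$ containing the identity with $V=V^{-1}$. For $K\subset X$ compact and $V\in\mathcal V_G$ let $\mathcal O^{\mathcal G}(K,V)=\{(\chi,\tilde\chi)\in\mathcal G\times\mathcal G:\gamma(\chi(z),\tilde\chi(z))\in V\ \forall z\in p^{-1}(K)\}$. $\mathbf U_{\mathcal G}$ is the uniform structure on $\mathcal G$ having these sets as a fundamental system of entourages; $\mathcal G$ carries the induced topology. *)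

From HB Require Import structures.
From mathcomp Require Import all_boot all_order all_algebra.
From mathcomp Require Import all_classical all_reals all_analysis.
From mathcomp Require Import Rstruct Rstruct_topology.
Set Implicit Arguments. Unset Strict Implicit. Unset Printing Implicit Defensive.
Import Order.TTheory GRing.Theory Num.Theory.
Local Open Scope classical_set_scope.
Local Open Scope ring_scope.

Definition is_group (G : Type) (mul : G -> G -> G) (inv : G -> G) (one : G) :=
  [/\ (forall a b c, mul a (mul b c) = mul (mul a b) c),
      (forall a, mul one a = a), (forall a, mul a one = a),
      (forall a, mul (inv a) a = one) & (forall a, mul a (inv a) = one)].

Definition is_topological_group (G : topologicalType)
  (mul : G -> G -> G) (inv : G -> G) (one : G) :=
  [/\ is_group mul inv one,
      continuous (fun gh : G * G => mul gh.1 gh.2) & continuous inv].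

Definition SIN_group (G : topologicalType)
  (mul : G -> G -> G) (inv : G -> G) (one : G) :=
  forall U : set G, nbhs one U ->
    exists W : set G, [/\ nbhs one W, W `<=` U &
      forall g w, W w -> W (mul (mul g w) (inv g))].

Definition principal_action (G E X : topologicalType)
  (mul : G -> G -> G) (one : G) (p : E -> X) (act : E -> G -> E) :=
  [/\ continuous p,
      continuous (fun eg : E * G => act eg.1 eg.2),
      (forall e, act e one = e),
      (forall e g h, act (act e g) h = act e (mul g h)) &
      (forall e g, p (act e g) = p e)].

(* xi is trivial over U: a G-equivariant homeomorphism U x G ~ p^{-1}(U) over U,
   given by psi : U x G -> p^{-1}(U) and its inverse e |-> (p e, phi e). *)
Definition trivial_over (G E X : topologicalType)
  (mul : G -> G -> G) (p : E -> X) (act : E -> G -> E) (U : set X) :=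
  exists (psi : X -> G -> E) (phi : E -> G),
  [/\ {within [set xg : X * G | U xg.1], continuous (fun xg => psi xg.1 xg.2)},
      {within p @^-1` U, continuous phi},
      (forall x g, U x -> p (psi x g) = x) &
      [/\ (forall x g h, U x -> psi x (mul g h) = act (psi x g) h),
      (forall e, U (p e) -> psi (p e) (phi e) = e) &
      (forall x g, U x -> phi (psi x g) = g)]].

Definition numerable_cover (X : topologicalType) (J : eqType)
  (Uc : J -> set X) (u : J -> X -> Rdefinitions.R) :=
  [/\ (forall j, open (Uc j)),
      (forall j, continuous (u j)),
      (forall j x, 0 <= u j x <= 1),
      (forall j x, u j x != 0 -> Uc j x) &
      [/\ (forall x : X, exists N : set X, nbhs x N /\ exists s : seq J,
          forall j, (exists y, N y /\ u j y != 0) -> j \in s) &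
      (forall x, exists s : seq J, [/\ uniq s,
          (forall j, u j x != 0 -> j \in s) & \sum_(j <- s) u j x = 1])]].

Definition numerable_principal_bundle (G E X : topologicalType)
  (mul : G -> G -> G) (one : G) (p : E -> X) (act : E -> G -> E) :=
  principal_action mul one p act /\
  exists (J : eqType) (Uc : J -> set X) (u : J -> X -> Rdefinitions.R),
    numerable_cover Uc u /\ forall j, trivial_over mul p act (Uc j).

Definition is_gauge (G E X : topologicalType) (p : E -> X) (act : E -> G -> E)
  (chi : E -> E) :=
  [/\ (forall e g, chi (act e g) = act (chi e) g),
      (forall e, p (chi e) = p e),
      continuous chi &
      exists psi : E -> E, [/\ continuous psi, cancel chi psi & cancel psi chi]].

Definition VG (G : topologicalType) (inv : G -> G) (one : G) (V : set G) :=
  [/\ open V, V one & V = inv @` V].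

Definition gauge_entourage (G E X : topologicalType) (p : E -> X)
  (gamma : E -> E -> G) (K : set X) (V : set G) (chi chi' : E -> E) :=
  forall z, K (p z) -> V (gamma (chi z) (chi' z)).

Definition gauge_nbhs (G E X : topologicalType) (inv : G -> G) (one : G)
  (p : E -> X) (act : E -> G -> E) (gamma : E -> E -> G)
  (chi : E -> E) (W : set (E -> E)) :=
  exists (K : set X) (V : set G), [/\ compact K, VG inv one V &
    forall chi', is_gauge p act chi' -> gauge_entourage p gamma K V chi chi' ->
      W chi'].

Definition gauge_topological_group (G E X : topologicalType) (inv : G -> G)
  (one : G) (p : E -> X) (act : E -> G -> E) (gamma : E -> E -> G) :=
  let gauge := is_gauge p act in
  let nb := gauge_nbhs inv one p act gamma in
  [/\
      gauge id,
      (forall a b, gauge a -> gauge b -> gauge (a \o b)),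
      (forall a a', gauge a -> cancel a a' -> cancel a' a -> gauge a'),
      (forall a b U, gauge a -> gauge b -> nb (a \o b) U ->
         exists Ua Ub, [/\ nb a Ua, nb b Ub &
           forall a' b', gauge a' -> gauge b' -> Ua a' -> Ub b' -> U (a' \o b')]) &
      (forall a ainv U, gauge a -> cancel a ainv -> cancel ainv a ->
         nb ainv U ->
         exists W, nb a W /\
           forall a' a'inv, gauge a' -> cancel a' a'inv -> cancel a'inv a' ->
             W a' -> U a'inv)].

Definition gauge_SIN (G E X : topologicalType) (inv : G -> G)
  (one : G) (p : E -> X) (act : E -> G -> E) (gamma : E -> E -> G) :=
  let gauge := is_gauge p act in
  let nb := gauge_nbhs inv one p act gamma in
  forall U, nb id U ->
    exists W, [/\ nb id W, (forall c, gauge c -> W c -> U c) &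
      forall c cinv w, gauge c -> cancel c cinv -> cancel cinv c ->
        gauge w -> W w -> W (c \o w \o cinv)].

From mathcomp Require Import all_boot all_classical all_reals all_analysis.
From mathcomp Require Import Rstruct Rstruct_topology.

(* Freeness of the action, which follows from local triviality, makes gamma
   a cocycle, gamma x z = gamma y z * gamma x y, and invariant under every
   gauge transformation c: gamma (c y) (c y') = gamma y y'.  Invariance makes
   each entourage O(K, V) of the identity stable under conjugation, so the
   gauge group is SIN; combined with the cocycle identity it reduces
   continuity of composition and inversion to that of multiplication and
   inversion of G at the identity. *)

Set Implicit Arguments.
Unset Strict Implicit.
Unset Printing Implicit Defensive.
Local Open Scope classical_set_scope.

Section GroupFacts.
Variables (G : Type) (mul : G -> G -> G) (inv : G -> G) (one : G).
Hypothesis Ggroup : is_group mul inv one.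

Lemma mulgI (a : G) : injective (mul a).
Proof.
case: Ggroup => mulA mul1g _ mulVg _ g h e.
by rewrite -(mul1g g) -(mulVg a) -mulA e mulA mulVg mul1g.
Qed.

Lemma inv_unique (h g : G) : mul h g = one -> g = inv h.
Proof. by case: Ggroup => _ _ _ _ mulgV e; apply: (@mulgI h); rewrite e mulgV. Qed.

Lemma invgK : involutive inv.
Proof. by case: Ggroup => _ _ _ mulVg _ a; apply/esym/inv_unique. Qed.

Lemma invg1 : inv one = one.
Proof. by case: Ggroup => _ mul1g _ _ _; apply/esym/inv_unique. Qed.

End GroupFacts.

Lemma VG_mul_sub (G : topologicalType) (mul : G -> G -> G) (inv : G -> G)
    (one : G) (V : set G) :
  is_topological_group mul inv one -> open V -> V one ->
  exists2 W, VG inv one W & forall h1 h2, W h1 -> W h2 -> V (mul h1 h2).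
Proof.
move=> [Ggroup mul_cont inv_cont] Vo V1.
have : nbhs (one, one) ((fun gh : G * G => mul gh.1 gh.2) @^-1` V).
  apply: mul_cont; rewrite /=; case: Ggroup => _ -> _ _ _.
  exact: open_nbhs_nbhs.
move=> [[A B] /= [nA nB] AB_V].
pose O := (A `&` B)°.
have Oo : open O by exact: open_interior.
exists (O `&` inv @^-1` O).
  split.
  - by apply: openI => //; apply: open_comp => // x _; exact: inv_cont.
  - by split; rewrite /= ?(invg1 Ggroup); exact: filterI.
  - apply/seteqP; split=> x.
    + by move=> [Ox Oix]; exists (inv x); rewrite /= ?(invgK Ggroup).
    + by move=> [y [Oy Oiy] <-]; rewrite /= (invgK Ggroup).
move=> h1 h2 [/interior_subset [Ah1 _] _] [/interior_subset [_ Bh2] _].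
exact: (AB_V (h1, h2)).
Qed.

Lemma numerable_cover_covers (X : topologicalType) (J : eqType)
    (Uc : J -> set X) (u : J -> X -> Rdefinitions.R) (x : X) :
  numerable_cover Uc u -> exists j, Uc j x.
Proof.
move=> [_ _ _ u_supp [_ /(_ x) [s [_ _ sum_u]]]].
case: (pselect (exists j, u j x != 0%R)) => [[j /u_supp Ujx]|no_supp].
  by exists j.
move: sum_u; rewrite big1_seq => [/eqP|j _].
  by rewrite eq_sym ssralg.GRing.oner_eq0.
by case: (eqVneq (u j x) 0%R) => // nz; case: no_supp; exists j.
Qed.

Lemma trivial_over_act_inj (G E X : topologicalType) (mul : G -> G -> G)
    (inv : G -> G) (one : G) (p : E -> X) (act : E -> G -> E) (U : set X)
    (e : E) :
  is_group mul inv one -> trivial_over mul p act U -> U (p e) ->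
  injective (act e).
Proof.
move=> Ggroup [psi [phi [_ _ _ [psiM psiK phiK]]]] Ue g h eq_act.
have phi_act k : phi (act e k) = mul (phi e) k.
  by rewrite -{1}(psiK e Ue) -psiM // phiK.
by apply: (mulgI Ggroup (a := phi e)); rewrite -!phi_act eq_act.
Qed.

Lemma numerable_bundle_act_inj (G E X : topologicalType) (mul : G -> G -> G)
    (inv : G -> G) (one : G) (p : E -> X) (act : E -> G -> E) (e : E) :
  is_group mul inv one -> numerable_principal_bundle mul one p act ->
  injective (act e).
Proof.
move=> Ggroup [_ [J [Uc [u [cover triv]]]]].
have [j Uj] := numerable_cover_covers (p e) cover.
exact: trivial_over_act_inj Ggroup (triv j) Uj.
Qed.

Section GaugeGroup.
Variables (G E X : topologicalType) (p : E -> X) (act : E -> G -> E).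

Lemma is_gauge_id : is_gauge p act id.
Proof.
split=> // [x|]; first exact: cvg_id.
by exists id; split=> // x; exact: cvg_id.
Qed.

Lemma is_gauge_comp (a b : E -> E) :
  is_gauge p act a -> is_gauge p act b -> is_gauge p act (a \o b).
Proof.
move=> [a_act pa a_cont [ai [ai_cont aK aiK]]].
move=> [b_act pb b_cont [bi [bi_cont bK biK]]].
split=> [e g|e|x|] /=; first by rewrite b_act a_act.
- by rewrite pa pb.
- exact: continuous_comp (b_cont x) (a_cont (b x)).
- exists (bi \o ai); split=> [x|x|x] /=.
  + exact: continuous_comp (ai_cont x) (bi_cont (ai x)).
  + by rewrite aK bK.
  + by rewrite biK aiK.
Qed.

Lemma is_gauge_can (a a' : E -> E) :
  is_gauge p act a -> cancel a a' -> is_gauge p act a'.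
Proof.
move=> [a_act pa a_cont [ai [ai_cont aK aiK]]] aK'.
have -> : a' = ai by apply: funext => x; rewrite -{1}(aiK x) aK'.
split=> [e g|e||]; last by exists a; split.
- by apply: (can_inj aK); rewrite a_act !aiK.
- by rewrite -{2}(aiK e) pa.
- exact: ai_cont.
Qed.

End GaugeGroup.

Section DivisionMap.
Variables (G E X : topologicalType) (mul : G -> G -> G) (inv : G -> G)
  (one : G) (p : E -> X) (act : E -> G -> E) (gamma : E -> E -> G).
Hypothesis Ggroup : is_group mul inv one.
Hypothesis act_principal : principal_action mul one p act.
Hypothesis act_inj : forall e, injective (act e).
Hypothesis gammaK : forall y z, p y = p z -> y = act z (gamma y z).

Lemma gamma_act (z : E) (g : G) : gamma (act z g) z = g.
Proof.
case: act_principal => _ _ _ _ p_act.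
by apply: (@act_inj z); rewrite -gammaK ?p_act.
Qed.

Lemma gamma_trans (x y z : E) : p x = p y -> p y = p z ->
  gamma x z = mul (gamma y z) (gamma x y).
Proof.
case: act_principal => _ _ _ actA _ pxy pyz.
by rewrite {1}(gammaK pxy) {1}(gammaK pyz) actA gamma_act.
Qed.

Lemma gammaV (y z : E) : p y = p z -> gamma z y = inv (gamma y z).
Proof.
move=> pyz; apply: (inv_unique Ggroup); rewrite -gamma_trans //.
by case: act_principal => _ _ act1 _ _; rewrite -{1}(act1 z) gamma_act.
Qed.

Lemma gamma_equivariant (chi : E -> E) (y z : E) :
  (forall e g, chi (act e g) = act (chi e) g) -> p y = p z ->
  gamma (chi y) (chi z) = gamma y z.
Proof. by move=> chi_act pyz; rewrite {1}(gammaK pyz) chi_act gamma_act. Qed.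

Lemma gauge_nbhs_entourage (K : set X) (V : set G) (chi : E -> E) :
  compact K -> VG inv one V ->
  gauge_nbhs inv one p act gamma chi (gauge_entourage p gamma K V chi).
Proof. by move=> cK VGV; exists K, V; split. Qed.

Lemma gauge_entourage_comp (K : set X) (V W : set G) (a b a' b' : E -> E) :
  is_gauge p act a -> is_gauge p act a' ->
  is_gauge p act b -> is_gauge p act b' ->
  (forall h1 h2, W h1 -> W h2 -> V (mul h1 h2)) ->
  gauge_entourage p gamma K W a a' -> gauge_entourage p gamma K W b b' ->
  gauge_entourage p gamma K V (a \o b) (a' \o b').
Proof.
move=> [a_act pa _ _] [_ pa' _ _] [_ pb _ _] [_ pb' _ _] WW_V aa' bb' z Kz /=.
rewrite (@gamma_trans _ (a (b' z))) ?gamma_equivariant ?pa ?pa' ?pb ?pb' //.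
by apply: WW_V; [apply: aa'; rewrite pb' | exact: bb'].
Qed.

Lemma gauge_entourage_inv (K : set X) (V : set G) (a ai a' a'i : E -> E) :
  is_gauge p act a -> is_gauge p act a' ->
  cancel ai a -> cancel a'i a' -> V = inv @` V ->
  gauge_entourage p gamma K V a a' -> gauge_entourage p gamma K V ai a'i.
Proof.
move=> [a_act pa _ _] [_ pa' _ _] aiK a'iK Vsym aa' z Kz.
set y := a'i z.
have py : p y = p z by rewrite -[in RHS](a'iK z) pa'.
have pai : p (ai z) = p z by rewrite -{2}(aiK z) pa.
rewrite -(gamma_equivariant a_act) ?pai ?py // aiK -{1}(a'iK z).
rewrite gammaV ?pa ?pa' // Vsym.
by exists (gamma (a y) (a' y)) => //; apply: aa'; rewrite py.
Qed.

Lemma gauge_entourage_conj (K : set X) (V : set G) (c ci w : E -> E) :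
  is_gauge p act c -> is_gauge p act w -> cancel ci c ->
  gauge_entourage p gamma K V id w ->
  gauge_entourage p gamma K V id (c \o w \o ci).
Proof.
move=> [c_act pc _ _] [_ pw _ _] ciK idw z Kz /=.
have pci : p (ci z) = p z by rewrite -{2}(ciK z) pc.
by rewrite -{1}(ciK z) gamma_equivariant ?pw //; apply: idw; rewrite pci.
Qed.

Lemma gauge_group_topological : is_topological_group mul inv one ->
  gauge_topological_group inv one p act gamma.
Proof.
move=> Gtop; split=> [||a a' ga aK _|a b U ga gb|a ai U ga _ aiK].
- exact: is_gauge_id.
- exact: is_gauge_comp.
- exact: is_gauge_can ga aK.
- move=> [K [V [cK [Vo V1 _] HU]]].
  have [W VGW WW_V] := VG_mul_sub Gtop Vo V1.
  exists (gauge_entourage p gamma K W a), (gauge_entourage p gamma K W b).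
  split; try exact: gauge_nbhs_entourage.
  move=> a' b' ga' gb' aa' bb'; apply: HU; first exact: is_gauge_comp.
  exact: gauge_entourage_comp aa' bb'.
- move=> [K [V [cK VGV HU]]].
  exists (gauge_entourage p gamma K V a).
  split; first exact: gauge_nbhs_entourage.
  move=> a' a'i ga' a'K a'iK aa'; apply: HU; first exact: is_gauge_can a'K.
  by case: VGV => _ _ Vsym; exact: gauge_entourage_inv aa'.
Qed.

Lemma gauge_group_SIN : gauge_SIN inv one p act gamma.
Proof.
move=> U [K [V [cK VGV HU]]].
exists (gauge_entourage p gamma K V id); split=> [||c ci w gc _ ciK gw].
- exact: gauge_nbhs_entourage.
- by move=> c gc; apply: HU.
- exact: gauge_entourage_conj.
Qed.

End DivisionMap.

Theorem proposition3p1 (G E X : topologicalType)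
  (mul : G -> G -> G) (inv : G -> G) (one : G)
  (p : E -> X) (act : E -> G -> E) (gamma : E -> E -> G) :
  is_topological_group mul inv one ->
  SIN_group mul inv one ->
  numerable_principal_bundle mul one p act ->
  (forall y z, p y = p z -> y = act z (gamma y z)) ->
  gauge_topological_group inv one p act gamma /\
  gauge_SIN inv one p act gamma.
Proof.
move=> Gtop _ bundle gammaK.
have Ggroup : is_group mul inv one by case: Gtop.
have act_inj e : injective (act e) := numerable_bundle_act_inj Ggroup bundle.
have [act_principal _] := bundle.
split.
- exact: gauge_group_topological Ggroup act_principal act_inj gammaK Gtop.
- exact: gauge_group_SIN act_principal act_inj gammaK.
Qed.
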